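(* Let $\Omega\subset\mathbb{R}^2$ be open, $(\Omega_n)_{n\in\mathbb{N}}$ non-empty open sets with $\Omega_n\ne\mathbb{R}^2$, $\Omega_n\subset\Omega_{n+1}$, $\Omega=\bigcup_n\Omega_n$ and $d_{n,k}:=\operatorname{dist}(\Omega_n,\partial\Omega_k)>0$ for all $k>n$, and let $\nu_n\colon\Omega\to(0,\infty)$ be continuous with $\nu_n\le\nu_{n+1}$. Suppose that for every $n\in\mathbb{N}$ there is an integer $I_1(n)>n$ such that for every $\varepsilon>0$ there is a compact set $K\subset\overline{\Omega_n}$ with $\nu_n(x)\le\varepsilon\nu_{I_1(n)}(x)$ for all $x\in\Omega_n\setminus K$. Let $n\in\mathbb{N}$. Then $\pi_{I_1(n),n}(\mathcal{D}(\Omega_{I_1(n)}))$ is dense in $\pi_{I_1(n),n}(\mathcal{E}\nu_{I_1(n)}(\Omega_{I_1(n)}))$ with respect to the seminorms $(|\cdot|_{n,m})_{m\in\mathbb{N}_0}$.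
   Context: $\operatorname{dist}(M_0,M_1):=\inf_{x\in M_0,y\in M_1}|x-y|$ (Euclidean norm; $\infty$ if a set is empty). For $n\in\mathbb{N}$, $m\in\mathbb{N}_0$, $f\in\mathcal{C}^\infty(\Omega_n,\mathbb{C})$: $|f|_{n,m}:=\sup_{x\in\Omega_n,\beta\in\mathbb{N}_0^2,|\beta|\le m}|\partial^\beta f(x)|\nu_n(x)$, and $\mathcal{E}\nu_n(\Omega_n)$ is the space of such $f$ with $|f|_{n,m}<\infty$ for all $m$. $\mathcal{D}(U)$ is the space of smooth compactly supported $\mathbb{C}$-valued functions on $U$. $\pi_{k,n}(f):=f|_{\Omega_n}$ for $k\ge n$. *)

From Stdlib Require Import Reals List.
From Coquelicot Require Import Coquelicot.
Open Scope R_scope.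

Definition pt : Type := (R * R)%type.

Definition eucl (p q : pt) : R :=
  sqrt ((fst p - fst q) ^ 2 + (snd p - snd q) ^ 2).

Definition d1 (f : pt -> C) : pt -> C := fun p =>
  (Derive (fun t => fst (f (t, snd p))) (fst p),
   Derive (fun t => snd (f (t, snd p))) (fst p)).
Definition d2 (f : pt -> C) : pt -> C := fun p =>
  (Derive (fun t => fst (f (fst p, t))) (snd p),
   Derive (fun t => snd (f (fst p, t))) (snd p)).
Definition ex_d1 (f : pt -> C) (p : pt) : Prop :=
  ex_derive (fun t => fst (f (t, snd p))) (fst p) /\
  ex_derive (fun t => snd (f (t, snd p))) (fst p).
Definition ex_d2 (f : pt -> C) (p : pt) : Prop :=
  ex_derive (fun t => fst (f (fst p, t))) (snd p) /\
  ex_derive (fun t => snd (f (fst p, t))) (snd p).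

Fixpoint dw (w : list bool) (f : pt -> C) : pt -> C :=
  match w with
  | nil => f
  | b :: w' => (if b then d2 else d1) (dw w' f)
  end.

Definition smooth_on (U : pt -> Prop) (f : pt -> C) : Prop :=
  forall (w : list bool) (p : pt), U p ->
    ex_d1 (dw w f) p /\ ex_d2 (dw w f) p /\ continuous (dw w f) p.

Definition dpow (i j : nat) (f : pt -> C) : pt -> C :=
  Nat.iter i d1 (Nat.iter j d2 f).

(* |f|_{U,nu,m} <= c, i.e. sup_{x in U, |beta| <= m} |d^beta f(x)| nu(x) <= c *)
Definition wbound (U : pt -> Prop) (nu : pt -> R) (m : nat) (f : pt -> C) (c : R) : Prop :=
  forall (x : pt) (i j : nat), U x -> (i + j <= m)%nat -> Cmod (dpow i j f x) * nu x <= c.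

Definition Enu (U : pt -> Prop) (nu : pt -> R) (f : pt -> C) : Prop :=
  smooth_on U f /\ forall m : nat, exists c : R, wbound U nu m f c.

Definition closure_of (A : pt -> Prop) (p : pt) : Prop :=
  forall eps : R, 0 < eps -> exists q, A q /\ eucl p q < eps.

Definition boundary (A : pt -> Prop) (p : pt) : Prop :=
  closure_of A p /\ closure_of (fun q => ~ A q) p.

Definition compact_set (K : pt -> Prop) : Prop :=
  forall (I : Type) (V : I -> pt -> Prop),
    (forall i, open (V i)) ->
    (forall x, K x -> exists i, V i x) ->
    exists l : list I, forall x, K x -> exists i, In i l /\ V i x.

Definition test_fn (U : pt -> Prop) (g : pt -> C) : Prop :=
  smooth_on U g /\
  exists K, compact_set K /\ (forall x, K x -> U x) /\ (forall x, ~ K x -> g x = 0%C).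

(* dist(A, B) > 0 (dist = inf |x-y|, +oo if a set is empty) *)
Definition dist_gt0 (A B : pt -> Prop) : Prop :=
  exists delta : R, 0 < delta /\ forall x y, A x -> B y -> delta <= eucl x y.

(* Take g = psi f with a smooth cutoff psi that is 1 near the compact set K on
   whose complement nu_n <= e nu_{I_1(n)}, and whose support stays within
   dist(Omega_n, boundary Omega_{I_1(n)}) of Omega_n, hence compactly inside
   Omega_{I_1(n)}.  Then f - g = (1 - psi) f vanishes near K, and off K the
   Leibniz rule bounds its derivatives by those of f times those of 1 - psi,
   while the weight gains the factor e.  The cutoff is
   psi(x, y) = sum_{k,l} c_{kl} theta_k(x) theta_l(y) for a partition of unity
   (theta_k) of R by translates of one bump at a scale fixed by the distance,
   with c_{kl} in {0, 1}; as only two theta_k are nonzero at any point, the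
   derivatives of psi are bounded independently of K, so e can be chosen last. *)

From Pilot Require Import Defs.
From Stdlib Require Import Reals List Lra Lia Classical ClassicalEpsilon FunctionalExtensionality Rgeom.
From Coquelicot Require Import Coquelicot.
Open Scope R_scope.

Fixpoint ex_derive_upto (L : nat) (u : R -> R) : Prop :=
  (forall x, ex_derive u x) /\
  match L with 0%nat => True | S L' => ex_derive_upto L' (Derive u) end.

Definition smooth_R (u : R -> R) : Prop := forall L, ex_derive_upto L u.

Lemma ex_derive_upto_S L u : ex_derive_upto (S L) u -> ex_derive_upto L u.
Proof.
  revert u; induction L as [|L IH]; intros u [Hu HD]; split; auto.
Qed.

Lemma ex_derive_upto_plus L u v :
  ex_derive_upto L u -> ex_derive_upto L v -> ex_derive_upto L (fun x => u x + v x).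
Proof.
  revert u v; induction L as [|L IH]; intros u v [Hu HDu] [Hv HDv];
    (split; [intro x; apply (ex_derive_plus u v); auto|]); auto.
  replace (Derive (fun x => u x + v x)) with (fun x => Derive u x + Derive v x).
  - now apply IH.
  - apply functional_extensionality; intro x; symmetry; now apply Derive_plus.
Qed.

Lemma ex_derive_upto_mult L u v :
  ex_derive_upto L u -> ex_derive_upto L v -> ex_derive_upto L (fun x => u x * v x).
Proof.
  revert u v; induction L as [|L IH]; intros u v Hu Hv;
    (split; [intro x; apply ex_derive_mult; [apply Hu | apply Hv]|]); auto.
  replace (Derive (fun x => u x * v x))
    with (fun x => Derive u x * v x + u x * Derive v x).
  - apply ex_derive_upto_plus; apply IH; auto using ex_derive_upto_S; [apply Hu | apply Hv].
  - apply functional_extensionality; intro x; symmetry; apply Derive_mult; [apply Hu | apply Hv].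
Qed.

Lemma ex_derive_upto_const L a : ex_derive_upto L (fun _ => a).
Proof.
  revert a; induction L as [|L IH]; intro a; split; auto using ex_derive_const.
  replace (Derive (fun _ : R => a)) with (fun _ : R => 0); [apply IH|].
  apply functional_extensionality; intro; now rewrite Derive_const.
Qed.

Lemma ex_derive_upto_inv L u :
  (forall x, u x <> 0) -> ex_derive_upto L u -> ex_derive_upto L (fun x => / u x).
Proof.
  intros Hnz; revert u Hnz; induction L as [|L IH]; intros u Hnz Hu;
    (split; [intro x; apply ex_derive_inv; auto; apply Hu|]); auto.
  replace (Derive (fun x => / u x)) with (fun x => (-1 * Derive u x) * (/ u x * / u x)).
  - apply ex_derive_upto_mult.
    + apply ex_derive_upto_mult; [apply ex_derive_upto_const | apply Hu].
    + apply ex_derive_upto_mult; apply IH; auto using ex_derive_upto_S.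
  - apply functional_extensionality; intro x.
    rewrite Derive_inv; auto; [field; auto | apply Hu].
Qed.

Lemma ex_derive_upto_comp_affine L u a b :
  ex_derive_upto L u -> ex_derive_upto L (fun x => u (a * x + b)).
Proof.
  revert u; induction L as [|L IH]; intros u Hu;
    (split; [intro x; apply (ex_derive_comp u (fun x => a * x + b));
             [apply Hu | auto_derive; auto]|]); auto.
  replace (Derive (fun x => u (a * x + b))) with (fun x => a * Derive u (a * x + b)).
  - apply ex_derive_upto_mult; [apply ex_derive_upto_const | apply IH, Hu].
  - apply functional_extensionality; intro x.
    rewrite (Derive_comp u (fun x => a * x + b)); [|apply Hu | auto_derive; auto].
    replace (Derive (fun x => a * x + b) x) with a; [ring|].
    symmetry; apply is_derive_unique; auto_derive; auto; ring.
Qed.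

Lemma smooth_R_ex_derive u x : smooth_R u -> ex_derive u x.
Proof. intros H; apply (H 0%nat). Qed.

Lemma smooth_R_Derive u : smooth_R u -> smooth_R (Derive u).
Proof. intros H L; exact (proj2 (H (S L))). Qed.

Lemma smooth_R_Derive_n u n : smooth_R u -> smooth_R (Derive_n u n).
Proof.
  intros H; induction n as [|n IH]; [exact H|].
  exact (smooth_R_Derive _ IH).
Qed.

Lemma smooth_R_ex_derive_n u n x : smooth_R u -> ex_derive_n u n x.
Proof. intros H; destruct n; [exact I|]; apply smooth_R_ex_derive, smooth_R_Derive_n, H. Qed.

Lemma smooth_R_continuous u x : smooth_R u -> continuous u x.
Proof. intros H; apply (@ex_derive_continuous R_AbsRing R_NormedModule), smooth_R_ex_derive, H. Qed.

Lemma smooth_R_ext u v : (forall x, u x = v x) -> smooth_R u -> smooth_R v.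
Proof. intros E; now replace v with u by (apply functional_extensionality; auto). Qed.

Lemma smooth_R_const a : smooth_R (fun _ => a).
Proof. intro; apply ex_derive_upto_const. Qed.

Lemma smooth_R_plus u v : smooth_R u -> smooth_R v -> smooth_R (fun x => u x + v x).
Proof. intros Hu Hv L; now apply ex_derive_upto_plus. Qed.

Lemma smooth_R_mult u v : smooth_R u -> smooth_R v -> smooth_R (fun x => u x * v x).
Proof. intros Hu Hv L; now apply ex_derive_upto_mult. Qed.

Lemma smooth_R_inv u : (forall x, u x <> 0) -> smooth_R u -> smooth_R (fun x => / u x).
Proof. intros Hnz Hu L; now apply ex_derive_upto_inv. Qed.

Lemma smooth_R_comp_affine u a b : smooth_R u -> smooth_R (fun x => u (a * x + b)).
Proof. intros Hu L; now apply ex_derive_upto_comp_affine. Qed.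

Lemma Derive_n_comp_affine u a b n x : smooth_R u ->
  Derive_n (fun y => u (a * y + b)) n x = a ^ n * Derive_n u n (a * x + b).
Proof.
  intros Hu.
  rewrite (Derive_n_comp_scal (fun z => u (z + b))).
  - now rewrite Derive_n_comp_trans.
  - apply filter_forall; intros z k _.
    apply smooth_R_ex_derive_n, (smooth_R_ext (fun y => u (1 * y + b))).
    + intro; f_equal; ring.
    + now apply smooth_R_comp_affine.
Qed.

Definition expinv (k : nat) (t : R) : R :=
  if Rle_dec t 0 then 0 else (/ t) ^ k * exp (- / t).

Lemma expinv_le0 k t : t <= 0 -> expinv k t = 0.
Proof. intros H; unfold expinv; destruct (Rle_dec t 0); [reflexivity | lra]. Qed.

Lemma expinv_gt0 k t : 0 < t -> expinv k t = (/ t) ^ k * exp (- / t).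
Proof. intros H; unfold expinv; destruct (Rle_dec t 0); [lra | reflexivity]. Qed.

Lemma expinv_pos k t : 0 < t -> 0 < expinv k t.
Proof.
  intros H; rewrite expinv_gt0 by exact H.
  apply Rmult_lt_0_compat; [apply pow_lt, Rinv_0_lt_compat, H | apply exp_pos].
Qed.

Lemma expinv_ge0 k t : 0 <= expinv k t.
Proof.
  destruct (Rle_or_lt t 0); [rewrite expinv_le0; lra | apply Rlt_le, expinv_pos; auto].
Qed.

Lemma pow_le_fact_exp n u : 0 <= u -> u ^ n <= INR (Factorial.fact n) * exp u.
Proof.
  intros Hu.
  set (a := fun k => u ^ k / INR (Factorial.fact k)).
  assert (Ha : forall k, 0 <= a k).
  { intro k; apply Rmult_le_pos; [now apply pow_le |].
    apply Rlt_le, Rinv_0_lt_compat, INR_fact_lt_0. }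
  assert (Hlast : a n <= sum_f_R0 a n).
  { destruct n; simpl; [lra|]. generalize (cond_pos_sum a n Ha); lra. }
  generalize (exp_ge_taylor u n Hu); fold a; intros Htaylor.
  replace (u ^ n) with (INR (Factorial.fact n) * a n)
    by (unfold a; field; apply Rgt_not_eq, INR_fact_lt_0).
  apply Rmult_le_compat_l; [apply pos_INR | lra].
Qed.

Lemma expinv_S_le k h : 0 < h -> expinv (S k) h <= INR (Factorial.fact (S (S k))) * h.
Proof.
  intros Hh; rewrite expinv_gt0 by exact Hh.
  assert (Hhinv : 0 < / h) by now apply Rinv_0_lt_compat.
  generalize (pow_le_fact_exp (S (S k)) (/ h) (Rlt_le _ _ Hhinv)); intros Hle.
  apply Rmult_le_reg_r with (exp (/ h) * / h); [apply Rmult_lt_0_compat; auto using exp_pos|].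
  replace ((/ h) ^ S k * exp (- / h) * (exp (/ h) * / h))
    with ((/ h) ^ S (S k) * (exp (- / h) * exp (/ h))) by (simpl; ring).
  rewrite <- exp_plus, Rplus_opp_l, exp_0, Rmult_1_r.
  replace (INR (Factorial.fact (S (S k))) * h * (exp (/ h) * / h))
    with (INR (Factorial.fact (S (S k))) * exp (/ h)) by (field; lra).
  exact Hle.
Qed.

(* At [0] the difference quotient is [expinv (S k) h], which [expinv_S_le] makes [O(h)]. *)
Lemma is_derive_expinv k x :
  is_derive (expinv k) x (- INR k * expinv (S k) x + expinv (S (S k)) x).
Proof.
  destruct (Rtotal_order x 0) as [Hx | [Hx | Hx]].
  - rewrite !expinv_le0 by lra; rewrite Rmult_0_r, Rplus_0_r.
    apply (is_derive_ext_loc (fun _ => 0)); [|apply (@is_derive_const R_AbsRing R_NormedModule)].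
    apply (locally_open (fun t => t < 0)); [apply open_lt | | exact Hx].
    intros t Ht; symmetry; apply expinv_le0; lra.
  - subst x; rewrite !expinv_le0 by lra; rewrite Rmult_0_r, Rplus_0_r.
    apply is_derive_Reals; intros eps Heps.
    set (c := INR (Factorial.fact (S (S k)))).
    assert (Hc : 0 < c) by apply INR_fact_lt_0.
    exists (mkposreal (eps / c) (Rdiv_lt_0_compat _ _ Heps Hc)); simpl.
    intros h Hh0 Hh; rewrite Rplus_0_l, (expinv_le0 k 0), Rminus_0_r, Rminus_0_r by lra.
    destruct (Rle_or_lt h 0) as [Hneg | Hpos].
    + rewrite expinv_le0, Rdiv_0_l, Rabs_R0 by exact Hneg; exact Heps.
    + replace (expinv k h / h) with (expinv (S k) h)
        by (rewrite !expinv_gt0 by exact Hpos; simpl; field; lra).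
      rewrite Rabs_pos_eq by apply expinv_ge0.
      rewrite Rabs_pos_eq in Hh by lra.
      apply Rle_lt_trans with (c * h); [apply expinv_S_le, Hpos|].
      apply Rmult_lt_reg_r with (/ c); [now apply Rinv_0_lt_compat|].
      replace (c * h * / c) with h by (field; lra); exact Hh.
  - rewrite !expinv_gt0 by exact Hx.
    apply (is_derive_ext_loc (fun t => (/ t) ^ k * exp (- / t))).
    + apply (locally_open (fun t => 0 < t)); [apply open_gt | | exact Hx].
      intros t Ht; symmetry; now apply expinv_gt0.
    + auto_derive; [lra|].
      destruct k as [|k]; [simpl; field; lra|].
      rewrite S_INR; simpl pred; simpl pow; field; lra.
Qed.

Lemma smooth_R_expinv k : smooth_R (expinv k).
Proof.
  intro L; revert k; induction L as [|L IH]; intro k;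
    (split; [intro x; eexists; apply is_derive_expinv|]); auto.
  replace (Derive (expinv k))
    with (fun x => - INR k * expinv (S k) x + expinv (S (S k)) x).
  - apply ex_derive_upto_plus; [apply ex_derive_upto_mult; [apply ex_derive_upto_const|] |]; apply IH.
  - apply functional_extensionality; intro x; symmetry.
    apply is_derive_unique, is_derive_expinv.
Qed.

Definition step (t : R) : R := expinv 0 t / (expinv 0 t + expinv 0 (1 - t)).

Lemma step_den_pos t : 0 < expinv 0 t + expinv 0 (1 - t).
Proof.
  destruct (Rle_or_lt t 0).
  - generalize (expinv_ge0 0 t) (expinv_pos 0 (1 - t)); intros; lra.
  - generalize (expinv_pos 0 t) (expinv_ge0 0 (1 - t)); intros; lra.
Qed.

Lemma smooth_R_step : smooth_R step.
Proof.
  apply smooth_R_mult; [apply smooth_R_expinv|].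
  apply smooth_R_inv; [intro t; apply Rgt_not_eq, step_den_pos|].
  apply smooth_R_plus; [apply smooth_R_expinv|].
  apply (smooth_R_ext (fun t => expinv 0 (-1 * t + 1))); [intro; f_equal; ring|].
  apply smooth_R_comp_affine, smooth_R_expinv.
Qed.

Lemma step_le0 t : t <= 0 -> step t = 0.
Proof. intros H; unfold step; rewrite expinv_le0 by exact H; apply Rdiv_0_l. Qed.

Lemma step_ge1 t : 1 <= t -> step t = 1.
Proof.
  intros H; unfold step; rewrite (expinv_le0 0 (1 - t)) by lra.
  generalize (expinv_pos 0 t); intros; field; lra.
Qed.

Lemma continuous_eq_at_left (F : R -> R) u a :
  continuous F u -> (forall t, t < u -> F t = a) -> F u = a.
Proof.
  intros HF Ha.
  apply (filterlim_locally_unique (F := at_left u) F).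
  - exact (filterlim_filter_le_1 _ (filter_le_within (F := locally u) _) HF).
  - apply (filterlim_ext_loc (fun _ => a)); [|apply filterlim_const].
    exists (mkposreal 1 Rlt_0_1); intros t _ Ht; symmetry; now apply Ha.
Qed.

Lemma continuous_eq_at_right (F : R -> R) u a :
  continuous F u -> (forall t, u < t -> F t = a) -> F u = a.
Proof.
  intros HF Ha.
  apply (filterlim_locally_unique (F := at_right u) F).
  - exact (filterlim_filter_le_1 _ (filter_le_within (F := locally u) _) HF).
  - apply (filterlim_ext_loc (fun _ => a)); [|apply filterlim_const].
    exists (mkposreal 1 Rlt_0_1); intros t _ Ht; symmetry; now apply Ha.
Qed.

Lemma Derive_n_S_locally_const (F : R -> R) a i u :
  locally u (fun t => F t = a) -> Derive_n F (S i) u = 0.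
Proof. intros H; rewrite (Derive_n_ext_loc F (fun _ => a)) by exact H; apply Derive_n_const. Qed.

Lemma Derive_n_step_le0 i u : u <= 0 -> Derive_n step i u = 0.
Proof.
  assert (Hlt : forall t, t < 0 -> Derive_n step i t = 0).
  { intros t Ht; destruct i as [|i]; [apply step_le0; lra|].
    apply (Derive_n_S_locally_const _ 0).
    apply (locally_open (fun s => s < 0)); [apply open_lt | | exact Ht].
    intros s Hs; apply step_le0; lra. }
  intros Hu; destruct (Rle_lt_or_eq_dec _ _ Hu) as [H | ->]; [now apply Hlt|].
  apply continuous_eq_at_left; [|exact Hlt].
  apply smooth_R_continuous, smooth_R_Derive_n, smooth_R_step.
Qed.

Lemma Derive_n_step_ge1 i u : 1 <= u -> Derive_n step (S i) u = 0.
Proof.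
  assert (Hgt : forall t, 1 < t -> Derive_n step (S i) t = 0).
  { intros t Ht; apply (Derive_n_S_locally_const _ 1).
    apply (locally_open (fun s => 1 < s)); [apply open_gt | | exact Ht].
    intros s Hs; apply step_ge1; lra. }
  intros Hu; destruct (Rle_lt_or_eq_dec _ _ Hu) as [H | <-]; [now apply Hgt|].
  apply continuous_eq_at_right; [|exact Hgt].
  apply smooth_R_continuous, smooth_R_Derive_n, smooth_R_step.
Qed.

Definition bump (u : R) : R := step u - step (u - 1).

Lemma smooth_R_bump : smooth_R bump.
Proof.
  apply (smooth_R_ext (fun u => step u + -1 * step (1 * u + -1))).
  { intro u; unfold bump; replace (1 * u + -1) with (u - 1) by ring; ring. }
  apply smooth_R_plus; [apply smooth_R_step|].
  apply smooth_R_mult; [apply smooth_R_const|].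
  apply smooth_R_comp_affine, smooth_R_step.
Qed.

Lemma Derive_n_bump i u : Derive_n bump i u = Derive_n step i u - Derive_n step i (u - 1).
Proof.
  unfold bump; rewrite Derive_n_minus.
  - f_equal; exact (Derive_n_comp_trans step i u (-1)).
  - apply filter_forall; intros; apply smooth_R_ex_derive_n, smooth_R_step.
  - apply filter_forall; intros; apply smooth_R_ex_derive_n.
    apply (smooth_R_ext (fun u => step (1 * u + -1))); [intro; f_equal; ring|].
    apply smooth_R_comp_affine, smooth_R_step.
Qed.

Lemma Derive_n_bump_eq0 i u : u <= 0 \/ 2 <= u -> Derive_n bump i u = 0.
Proof.
  rewrite Derive_n_bump; intros [H | H].
  - rewrite !Derive_n_step_le0 by lra; ring.
  - destruct i as [|i].
    + simpl; rewrite !step_ge1 by lra; ring.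
    + rewrite !Derive_n_step_ge1 by lra; ring.
Qed.

Lemma bump_neq0 u : bump u <> 0 -> 0 < u < 2.
Proof.
  intros H; destruct (Rle_or_lt u 0); [exfalso; apply H, (Derive_n_bump_eq0 0); auto|].
  destruct (Rle_or_lt 2 u); [exfalso; apply H, (Derive_n_bump_eq0 0); auto | lra].
Qed.

Lemma Derive_n_bump_bounded m :
  exists B, forall i u, (i <= m)%nat -> Rabs (Derive_n bump i u) <= B.
Proof.
  assert (Hi : forall i, exists B, forall u, Rabs (Derive_n bump i u) <= B).
  { intro i.
    destruct (continuity_ab_maj (fun u => Rabs (Derive_n bump i u)) 0 2) as [x [Hx _]]; [lra| |].
    { intros c _; apply continuity_pt_filterlim, continuous_Rabs_comp.
      apply smooth_R_continuous, smooth_R_Derive_n, smooth_R_bump. }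
    exists (Rabs (Derive_n bump i x)); intro u.
    destruct (Rle_or_lt u 0) as [H | H]; [|destruct (Rle_or_lt 2 u) as [H' | H']].
    - rewrite Derive_n_bump_eq0, Rabs_R0 by auto; apply Rabs_pos.
    - rewrite Derive_n_bump_eq0, Rabs_R0 by auto; apply Rabs_pos.
    - apply Hx; lra. }
  induction m as [|m [B HB]].
  - destruct (Hi 0%nat) as [B HB]; exists B; intros i u Hle.
    replace i with 0%nat by lia; apply HB.
  - destruct (Hi (S m)) as [B' HB']; exists (Rmax B B'); intros i u Hle.
    destruct (Nat.eq_dec i (S m)) as [-> | Hne].
    + eapply Rle_trans; [apply HB' | apply Rmax_r].
    + eapply Rle_trans; [apply HB; lia | apply Rmax_l].
Qed.

Lemma sum_f_R0_telescope (a : nat -> R) n :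
  sum_f_R0 (fun k => a k - a (S k)) n = a 0%nat - a (S n).
Proof. induction n as [|n IH]; simpl; [|rewrite IH]; ring. Qed.

(* At most one shift [t - k] falls in the half-open unit interval. *)
Lemma sum_abs_shift_le (F : R -> R) B t n :
  (forall u, F u <> 0 -> 0 < u <= 1) -> (forall u, Rabs (F u) <= B) ->
  sum_f_R0 (fun k => Rabs (F (t - INR k))) n <= B.
Proof.
  intros Hsupp HB; induction n as [|n IH]; [apply HB|]; rewrite tech5.
  destruct (Req_dec (F (t - INR (S n))) 0) as [Hz | Hnz].
  - rewrite Hz, Rabs_R0; lra.
  - destruct (Hsupp _ Hnz) as [Hlo _].
    rewrite (sum_eq _ (fun _ => 0)), sum_cte, Rmult_0_l, Rplus_0_l; [apply HB|].
    intros k Hk; destruct (Req_dec (F (t - INR k)) 0) as [-> | Hk0]; [apply Rabs_R0|].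
    destruct (Hsupp _ Hk0) as [_ Hhi].
    assert (INR k + 1 <= INR (S n)) by (rewrite <- S_INR; apply le_INR; lia).
    lra.
Qed.

Lemma sum_abs_shift_le2 (F : R -> R) B t n :
  (forall u, F u <> 0 -> 0 < u < 2) -> (forall u, Rabs (F u) <= B) ->
  sum_f_R0 (fun k => Rabs (F (t - INR k))) n <= 2 * B.
Proof.
  intros Hsupp HB.
  assert (HB0 : 0 <= B) by (eapply Rle_trans; [apply Rabs_pos | apply (HB 0)]).
  set (G := fun u => if Rle_dec u 1 then F u else 0).
  set (H := fun u => if Rle_dec u 0 then 0 else F (u + 1)).
  assert (Hsplit : forall u, F u = G u + H (u - 1)).
  { intro u; unfold G, H.
    destruct (Rle_dec u 1), (Rle_dec (u - 1) 0); try lra.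
    replace (u - 1 + 1) with u by ring; ring. }
  assert (HG : sum_f_R0 (fun k => Rabs (G (t - INR k))) n <= B).
  { apply sum_abs_shift_le.
    - intros u; unfold G; destruct (Rle_dec u 1); [|tauto].
      intros Hu; destruct (Hsupp u Hu); lra.
    - intro u; unfold G; destruct (Rle_dec u 1); [apply HB | rewrite Rabs_R0; lra]. }
  assert (HH : sum_f_R0 (fun k => Rabs (H (t - 1 - INR k))) n <= B).
  { apply sum_abs_shift_le.
    - intros u; unfold H; destruct (Rle_dec u 0); [tauto|].
      intros Hu; destruct (Hsupp _ Hu); lra.
    - intro u; unfold H; destruct (Rle_dec u 0); [rewrite Rabs_R0; lra | apply HB]. }
  apply Rle_trans with (sum_f_R0 (fun k => Rabs (G (t - INR k)) + Rabs (H (t - 1 - INR k))) n);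
    [|rewrite plus_sum; lra].
  apply sum_Rle; intros k _.
  rewrite Hsplit; replace (t - INR k - 1) with (t - 1 - INR k) by ring.
  apply Rabs_triang.
Qed.

Section Tiles.

Variables (r : R) (N : nat).
Hypothesis r_pos : 0 < r.

Definition tile (k : nat) (x : R) : R := bump (/ r * x + (INR N - INR k)).

Lemma smooth_R_tile k : smooth_R (tile k).
Proof. apply smooth_R_comp_affine, smooth_R_bump. Qed.

Lemma tile_neq0 k x : tile k x <> 0 -> (INR k - INR N) * r < x < (INR k - INR N + 2) * r.
Proof.
  intros H; apply bump_neq0 in H.
  replace x with ((/ r * x + (INR N - INR k) - (INR N - INR k)) * r) by (field; lra).
  split; apply Rmult_lt_compat_r; lra.
Qed.

Lemma sum_tile x : Rabs x <= (INR N - 1) * r -> sum_f_R0 (fun k => tile k x) (2 * N) = 1.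
Proof.
  intros Hx; set (t := / r * x + INR N).
  rewrite (sum_eq _ (fun k => step (t - INR k) - step (t - INR (S k)))).
  - rewrite sum_f_R0_telescope, Rminus_0_r.
    assert (Hxr : Rabs (/ r * x) <= INR N - 1).
    { rewrite Rabs_mult, Rabs_inv, (Rabs_pos_eq r) by lra.
      apply Rmult_le_reg_l with r; [lra|]; rewrite <- Rmult_assoc, Rinv_r, Rmult_1_l by lra; lra. }
    apply Rabs_le_between in Hxr.
    rewrite step_ge1, step_le0; [ring | |]; unfold t;
      rewrite ?S_INR, ?mult_INR; simpl INR; lra.
  - intros k _; unfold tile, bump; rewrite S_INR; unfold t.
    f_equal; f_equal; ring.
Qed.

Lemma Derive_n_tile k i x :
  Derive_n (tile k) i x = (/ r) ^ i * Derive_n bump i (/ r * x + (INR N - INR k)).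
Proof. apply Derive_n_comp_affine, smooth_R_bump. Qed.

Lemma sum_abs_Derive_n_tile_le i B x n :
  (forall u, Rabs (Derive_n bump i u) <= B) ->
  sum_f_R0 (fun k => Rabs (Derive_n (tile k) i x)) n <= 2 * B * (/ r) ^ i.
Proof.
  intros HB.
  assert (Hri : 0 <= (/ r) ^ i) by (apply pow_le, Rlt_le, Rinv_0_lt_compat, r_pos).
  rewrite (sum_eq _ (fun k => Rabs (Derive_n bump i (/ r * x + INR N - INR k)) * (/ r) ^ i)).
  - rewrite <- scal_sum, Rmult_comm.
    apply Rmult_le_compat_r; [exact Hri|].
    apply sum_abs_shift_le2; [|exact HB].
    intros u Hu; split; apply Rnot_le_lt; intro Hle; apply Hu, Derive_n_bump_eq0; lra.
  - intros k _; rewrite Derive_n_tile, Rabs_mult, (Rabs_pos_eq _ Hri), Rmult_comm.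
    do 3 f_equal; ring.
Qed.

End Tiles.

Definition pd (b : bool) : (pt -> C) -> pt -> C := if b then Defs.d2 else Defs.d1.
Definition ex_pd (b : bool) (f : pt -> C) (p : pt) : Prop := if b then ex_d2 f p else ex_d1 f p.
Definition line (b : bool) (p : pt) (t : R) : pt := if b then (fst p, t) else (t, snd p).
Definition coord (b : bool) (p : pt) : R := if b then snd p else fst p.

Lemma pdE b f p : pd b f p =
  (Derive (fun t => fst (f (line b p t))) (coord b p),
   Derive (fun t => snd (f (line b p t))) (coord b p)).
Proof. now destruct b. Qed.

Lemma ex_pdE b f p : ex_pd b f p <->
  ex_derive (fun t => fst (f (line b p t))) (coord b p) /\
  ex_derive (fun t => snd (f (line b p t))) (coord b p).
Proof. now destruct b. Qed.

Lemma line_coord b p : line b p (coord b p) = p.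
Proof. now destruct b, p. Qed.

Lemma locally_line (U : pt -> Prop) b p :
  open U -> U p -> locally (coord b p) (fun t => U (line b p t)).
Proof.
  intros HU Hp; destruct (HU p Hp) as [e He]; exists e; intros t Ht.
  apply He; destruct b; split; simpl; auto using ball_center.
Qed.

Lemma continuous_C (f : pt -> C) p :
  continuous (fun q => fst (f q)) p -> continuous (fun q => snd (f q)) p -> continuous f p.
Proof.
  intros H1 H2; apply filterlim_locally; intro eps.
  generalize (proj1 (filterlim_locally _ _) H1 eps) (proj1 (filterlim_locally _ _) H2 eps).
  intros A B; generalize (filter_and _ _ A B); apply filter_imp.
  intros q [a b]; split; assumption.
Qed.

Lemma continuous_C_fst (f : pt -> C) p : continuous f p -> continuous (fun q => fst (f q)) p.
Proof. intros H; apply (continuous_comp f fst); [exact H | apply continuous_fst]. Qed.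

Lemma continuous_C_snd (f : pt -> C) p : continuous f p -> continuous (fun q => snd (f q)) p.
Proof. intros H; apply (continuous_comp f snd); [exact H | apply continuous_snd]. Qed.

Definition fzero : pt -> C := fun _ => RtoC 0.
Definition fplus (f g : pt -> C) : pt -> C := fun p => Cplus (f p) (g p).
Definition fmult (f g : pt -> C) : pt -> C := fun p => Cmult (f p) (g p).

Definition agree_on (U : pt -> Prop) (f g : pt -> C) : Prop := forall p, U p -> f p = g p.

Lemma agree_on_trans U f g h : agree_on U f g -> agree_on U g h -> agree_on U f h.
Proof. intros A B p Hp; rewrite A, B; auto. Qed.

Definition diff_on (U : pt -> Prop) (f : pt -> C) : Prop :=
  forall p, U p -> (forall b, ex_pd b f p) /\ continuous f p.

Lemma pd_zero b : pd b fzero = fzero.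
Proof.
  apply functional_extensionality; intro p; rewrite pdE; unfold fzero; simpl.
  now rewrite Derive_const.
Qed.

Lemma diff_on_zero U : diff_on U fzero.
Proof.
  intros p _; split; [intro b; apply ex_pdE; unfold fzero; simpl; split; apply ex_derive_const|].
  apply continuous_const.
Qed.

(* Smoothness counted in levels; products stay smooth by induction on [L], since
   [pd b (f g)] is a sum of products of lower level. *)
Fixpoint smooth_upto (L : nat) (U : pt -> Prop) (f : pt -> C) : Prop :=
  diff_on U f /\ match L with 0%nat => True | S L' => forall b, smooth_upto L' U (pd b f) end.

Lemma dw_app w b f : dw (w ++ b :: nil) f = dw w (pd b f).
Proof. induction w as [|a w IH]; simpl; [reflexivity | now rewrite IH]. Qed.

Lemma smooth_on_diff_on U f : smooth_on U f -> diff_on U f.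
Proof.
  intros H p Hp; destruct (H nil p Hp) as [H1 [H2 H3]].
  split; [intros []; assumption | assumption].
Qed.

Lemma smooth_on_pd U b f : smooth_on U f -> smooth_on U (pd b f).
Proof. intros H w p Hp; rewrite <- dw_app; apply H, Hp. Qed.

Lemma smooth_on_iter_pd U b k f : smooth_on U f -> smooth_on U (Nat.iter k (pd b) f).
Proof. intros H; induction k as [|k IH]; [exact H | now apply smooth_on_pd]. Qed.

Lemma smooth_on_upto U f : smooth_on U f <-> forall L, smooth_upto L U f.
Proof.
  split.
  - intros H L; revert f H; induction L as [|L IH]; intros f H;
      split; auto using smooth_on_diff_on; intro b; apply IH, smooth_on_pd, H.
  - intros H w; revert f H; induction w as [|b w IH] using rev_ind; intros f H p Hp.
    + destruct (proj1 (H 0%nat) p Hp) as [Hd Hc]; exact (conj (Hd false) (conj (Hd true) Hc)).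
    + rewrite dw_app; apply IH; [intro L; exact (proj2 (H (S L)) b) | exact Hp].
Qed.

Definition csum {A : Type} (l : list A) (F : A -> pt -> C) : pt -> C :=
  fold_right (fun a acc => fplus (F a) acc) fzero l.

Lemma csum_app {A} (l1 l2 : list A) F p :
  csum (l1 ++ l2) F p = Cplus (csum l1 F p) (csum l2 F p).
Proof.
  induction l1 as [|a l IH]; simpl; [unfold fzero; now rewrite Cplus_0_l|].
  unfold fplus; rewrite IH; apply Cplus_assoc.
Qed.

Lemma csum_map {A B} (g : A -> B) (l : list A) F : csum (map g l) F = csum l (fun a => F (g a)).
Proof. induction l as [|a l IH]; simpl; [reflexivity | now rewrite IH]. Qed.

Lemma csum_fplus {A} (l : list A) F G p :
  csum l (fun a => fplus (F a) (G a)) p = Cplus (csum l F p) (csum l G p).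
Proof.
  induction l as [|a l IH]; simpl; unfold fplus; [unfold fzero; now rewrite Cplus_0_l|].
  unfold fplus in IH; rewrite IH.
  destruct (F a p), (G a p), (csum l F p), (csum l G p); unfold Cplus; simpl; f_equal; ring.
Qed.

Lemma agree_on_csum {A} U (l : list A) F G :
  (forall a, In a l -> agree_on U (F a) (G a)) -> agree_on U (csum l F) (csum l G).
Proof.
  intros H p Hp; induction l as [|a l IH]; simpl; [reflexivity|].
  unfold fplus; rewrite (H a (or_introl eq_refl) p Hp), IH; [reflexivity|].
  intros b Hb; apply H; right; exact Hb.
Qed.

Lemma Cmod_csum_le {A} (l : list A) F p B :
  (forall a, In a l -> Cmod (F a p) <= B) -> Cmod (csum l F p) <= INR (length l) * B.
Proof.
  intros H; induction l as [|a l IH]; simpl csum; simpl length.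
  - unfold fzero; rewrite Cmod_0; simpl; lra.
  - unfold fplus; eapply Rle_trans; [apply Cmod_triangle|].
    assert (Cmod (csum l F p) <= INR (length l) * B) by (apply IH; intros; apply H; simpl; auto).
    specialize (H a (or_introl eq_refl)); rewrite S_INR; lra.
Qed.

(* Each split [(a, k - a)] occurs [C(k, a)] times, so no binomial coefficients appear. *)
Fixpoint leibniz_pairs (k : nat) : list (nat * nat) :=
  match k with
  | 0%nat => (0%nat, 0%nat) :: nil
  | S k => map (fun ab => (S (fst ab), snd ab)) (leibniz_pairs k) ++
           map (fun ab => (fst ab, S (snd ab))) (leibniz_pairs k)
  end.

Lemma length_leibniz_pairs k : length (leibniz_pairs k) = (2 ^ k)%nat.
Proof. induction k as [|k IH]; simpl; [|rewrite length_app, !length_map, IH]; lia. Qed.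

Lemma in_leibniz_pairs k a a' : In (a, a') (leibniz_pairs k) -> (a + a' = k)%nat.
Proof.
  revert a a'; induction k as [|k IH]; simpl; intros a a' H.
  - destruct H as [H | []]; inversion H; reflexivity.
  - apply in_app_or in H; destruct H as [H | H]; apply in_map_iff in H;
      destruct H as [[x y] [E Hin]]; simpl in E; inversion E; subst;
      apply IH in Hin; lia.
Qed.

Lemma dpowE i j f : dpow i j f = Nat.iter i (pd false) (Nat.iter j (pd true) f).
Proof. reflexivity. Qed.

Lemma dpow_fzero i j : dpow i j fzero = fzero.
Proof.
  assert (H : forall b k, Nat.iter k (pd b) fzero = fzero)
    by (intros b k; induction k as [|k IH]; [reflexivity | rewrite Nat.iter_succ, IH; apply pd_zero]).
  now rewrite dpowE, !H.
Qed.

Section Calculus.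

Variable U : pt -> Prop.
Hypothesis U_open : open U.

Lemma agree_on_pd b f g : agree_on U f g -> agree_on U (pd b f) (pd b g).
Proof.
  intros H p Hp; rewrite !pdE; f_equal; apply Derive_ext_loc;
    generalize (locally_line U b p U_open Hp); apply filter_imp; intros t Ht; now rewrite H.
Qed.

Lemma diff_on_agree f g : agree_on U f g -> diff_on U f -> diff_on U g.
Proof.
  intros H Hf p Hp; destruct (Hf p Hp) as [Hd Hc]; split.
  - intro b; specialize (Hd b); rewrite ex_pdE in *; destruct Hd as [H1 H2].
    split; [eapply ex_derive_ext_loc, H1 | eapply ex_derive_ext_loc, H2];
      generalize (locally_line U b p U_open Hp); apply filter_imp; intros t Ht; now rewrite H.
  - unfold continuous; rewrite <- (H p Hp).
    apply (filterlim_ext_loc f g); [|exact Hc].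
    generalize (U_open p Hp); apply filter_imp; auto.
Qed.

Lemma diff_on_plus f g : diff_on U f -> diff_on U g -> diff_on U (fplus f g).
Proof.
  intros Hf Hg p Hp; destruct (Hf p Hp) as [Hfd Hfc], (Hg p Hp) as [Hgd Hgc]; split.
  - intro b; specialize (Hfd b); specialize (Hgd b); rewrite ex_pdE in *.
    destruct Hfd, Hgd; split; unfold fplus, Cplus; simpl.
    + apply (ex_derive_plus (fun t => fst (f (line b p t))) (fun t => fst (g (line b p t)))); auto.
    + apply (ex_derive_plus (fun t => snd (f (line b p t))) (fun t => snd (g (line b p t)))); auto.
  - apply (continuous_plus f g); auto.
Qed.

Lemma diff_on_mult f g : diff_on U f -> diff_on U g -> diff_on U (fmult f g).
Proof.
  intros Hf Hg p Hp; destruct (Hf p Hp) as [Hfd Hfc], (Hg p Hp) as [Hgd Hgc]; split.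
  - intro b; specialize (Hfd b); specialize (Hgd b); rewrite ex_pdE in *.
    destruct Hfd, Hgd; split; unfold fmult, Cmult; simpl.
    + apply (ex_derive_minus (fun t => fst (f (line b p t)) * fst (g (line b p t)))
                             (fun t => snd (f (line b p t)) * snd (g (line b p t))));
        apply ex_derive_mult; auto.
    + apply (ex_derive_plus (fun t => fst (f (line b p t)) * snd (g (line b p t)))
                            (fun t => snd (f (line b p t)) * fst (g (line b p t))));
        apply ex_derive_mult; auto.
  - assert (Hm : forall u v : pt -> R, continuous u p -> continuous v p ->
              continuous (fun q => u q * v q) p)
      by (intros u v Hu Hv; exact (@continuous_mult _ R_AbsRing u v p Hu Hv)).
    apply continuous_C; unfold fmult, Cmult; simpl.
    + apply (continuous_minus (fun q => fst (f q) * fst (g q)) (fun q => snd (f q) * snd (g q)));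
        apply Hm; auto using continuous_C_fst, continuous_C_snd.
    + apply (continuous_plus (fun q => fst (f q) * snd (g q)) (fun q => snd (f q) * fst (g q)));
        apply Hm; auto using continuous_C_fst, continuous_C_snd.
Qed.

Lemma pd_plus b f g : diff_on U f -> diff_on U g ->
  agree_on U (pd b (fplus f g)) (fplus (pd b f) (pd b g)).
Proof.
  intros Hf Hg p Hp; destruct (Hf p Hp) as [Hfd _], (Hg p Hp) as [Hgd _].
  specialize (Hfd b); specialize (Hgd b); rewrite ex_pdE in *.
  destruct Hfd, Hgd; unfold fplus, Cplus; rewrite !pdE; simpl; f_equal.
  - apply (Derive_plus (fun t => fst (f (line b p t))) (fun t => fst (g (line b p t)))); auto.
  - apply (Derive_plus (fun t => snd (f (line b p t))) (fun t => snd (g (line b p t)))); auto.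
Qed.

Lemma pd_mult b f g : diff_on U f -> diff_on U g ->
  agree_on U (pd b (fmult f g)) (fplus (fmult (pd b f) g) (fmult f (pd b g))).
Proof.
  intros Hf Hg p Hp; destruct (Hf p Hp) as [Hfd _], (Hg p Hp) as [Hgd _].
  specialize (Hfd b); specialize (Hgd b); rewrite ex_pdE in *.
  destruct Hfd, Hgd; unfold fplus, fmult, Cplus, Cmult; rewrite !pdE; simpl; f_equal.
  - rewrite (Derive_minus (fun t => fst (f (line b p t)) * fst (g (line b p t)))
                          (fun t => snd (f (line b p t)) * snd (g (line b p t))));
      try (apply ex_derive_mult; auto).
    rewrite !Derive_mult, !line_coord by auto; ring.
  - rewrite (Derive_plus (fun t => fst (f (line b p t)) * snd (g (line b p t)))
                         (fun t => snd (f (line b p t)) * fst (g (line b p t))));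
      try (apply ex_derive_mult; auto).
    rewrite !Derive_mult, !line_coord by auto; ring.
Qed.

Lemma smooth_upto_S L f : smooth_upto (S L) U f -> smooth_upto L U f.
Proof.
  revert f; induction L as [|L IH]; intros f [Hd Hpd]; split; auto.
Qed.

Lemma smooth_upto_agree L f g : agree_on U f g -> smooth_upto L U f -> smooth_upto L U g.
Proof.
  revert f g; induction L as [|L IH]; intros f g H [Hd Hpd];
    (split; [exact (diff_on_agree f g H Hd)|]); auto.
  intro b; apply (IH (pd b f)); [apply agree_on_pd|]; auto.
Qed.

Lemma smooth_upto_plus L f g :
  smooth_upto L U f -> smooth_upto L U g -> smooth_upto L U (fplus f g).
Proof.
  revert f g; induction L as [|L IH]; intros f g [Hf Hpf] [Hg Hpg];
    (split; [now apply diff_on_plus|]); auto.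
  intro b; apply (smooth_upto_agree _ (fplus (pd b f) (pd b g))).
  - intros p Hp; symmetry; now apply pd_plus.
  - now apply IH.
Qed.

Lemma smooth_upto_mult L f g :
  smooth_upto L U f -> smooth_upto L U g -> smooth_upto L U (fmult f g).
Proof.
  revert f g; induction L as [|L IH]; intros f g Hf Hg;
    (split; [apply diff_on_mult; [apply Hf | apply Hg]|]); auto.
  intro b; apply (smooth_upto_agree _ (fplus (fmult (pd b f) g) (fmult f (pd b g)))).
  - intros p Hp; symmetry; apply pd_mult; [apply Hf | apply Hg | exact Hp].
  - apply smooth_upto_plus; apply IH; auto using smooth_upto_S; [apply Hf | apply Hg].
Qed.

Lemma smooth_on_zero : smooth_on U fzero.
Proof.
  apply smooth_on_upto; intro L; induction L as [|L IH];
    (split; [apply diff_on_zero|]); auto.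
  intro b; now rewrite pd_zero.
Qed.

Lemma smooth_on_plus f g : smooth_on U f -> smooth_on U g -> smooth_on U (fplus f g).
Proof. rewrite !smooth_on_upto; intros Hf Hg L; now apply smooth_upto_plus. Qed.

Lemma smooth_on_mult f g : smooth_on U f -> smooth_on U g -> smooth_on U (fmult f g).
Proof. rewrite !smooth_on_upto; intros Hf Hg L; now apply smooth_upto_mult. Qed.

Lemma smooth_on_csum {A} (l : list A) F :
  (forall a, In a l -> smooth_on U (F a)) -> smooth_on U (csum l F).
Proof.
  intros H; induction l as [|a l IH]; simpl; [apply smooth_on_zero|].
  apply smooth_on_plus; [apply H; now left | apply IH; intros; apply H; now right].
Qed.

Lemma agree_on_iter_pd b k f g :
  agree_on U f g -> agree_on U (Nat.iter k (pd b) f) (Nat.iter k (pd b) g).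
Proof. intros H; induction k as [|k IH]; [exact H | now apply agree_on_pd]. Qed.

Lemma agree_on_dpow i j f g : agree_on U f g -> agree_on U (dpow i j f) (dpow i j g).
Proof. intros H; rewrite !dpowE; now apply agree_on_iter_pd, agree_on_iter_pd. Qed.

Lemma pd_csum {A} b (l : list A) F : (forall a, In a l -> smooth_on U (F a)) ->
  agree_on U (pd b (csum l F)) (csum l (fun a => pd b (F a))).
Proof.
  intros H; induction l as [|a l IH]; simpl.
  - rewrite pd_zero; intros p _; reflexivity.
  - assert (Hl : forall a, In a l -> smooth_on U (F a)) by (intros; apply H; now right).
    eapply agree_on_trans; [apply pd_plus; auto; apply smooth_on_diff_on|].
    + apply H; now left.
    + now apply smooth_on_csum.
    + intros p Hp; unfold fplus; now rewrite IH.
Qed.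

Lemma iter_pd_csum {A} b k (l : list A) F : (forall a, In a l -> smooth_on U (F a)) ->
  agree_on U (Nat.iter k (pd b) (csum l F)) (csum l (fun a => Nat.iter k (pd b) (F a))).
Proof.
  intros H; induction k as [|k IH]; simpl; [intros p _; reflexivity|].
  eapply agree_on_trans; [apply agree_on_pd, IH|].
  apply pd_csum; intros; now apply smooth_on_iter_pd, H.
Qed.

Lemma iter_pd_mult b k phi f : smooth_on U phi -> smooth_on U f ->
  agree_on U (Nat.iter k (pd b) (fmult phi f))
    (csum (leibniz_pairs k)
       (fun ab => fmult (Nat.iter (fst ab) (pd b) phi) (Nat.iter (snd ab) (pd b) f))).
Proof.
  intros Hphi Hf; induction k as [|k IH].
  - intros p _; simpl; unfold fplus, fzero; now rewrite Cplus_0_r.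
  - simpl Nat.iter at 1.
    eapply agree_on_trans; [apply agree_on_pd, IH|].
    eapply agree_on_trans;
      [apply pd_csum; intros; apply smooth_on_mult; now apply smooth_on_iter_pd|].
    eapply agree_on_trans;
      [apply agree_on_csum; intros; apply pd_mult; auto; apply smooth_on_diff_on;
       now apply smooth_on_iter_pd|].
    intros p _; simpl leibniz_pairs.
    now rewrite csum_app, !csum_map, csum_fplus.
Qed.

Lemma dpow_mult i j phi f : smooth_on U phi -> smooth_on U f ->
  agree_on U (dpow i j (fmult phi f))
    (csum (leibniz_pairs j) (fun cc => csum (leibniz_pairs i) (fun aa =>
       fmult (dpow (fst aa) (fst cc) phi) (dpow (snd aa) (snd cc) f)))).
Proof.
  intros Hphi Hf; rewrite dpowE.
  eapply agree_on_trans; [apply agree_on_iter_pd, iter_pd_mult; auto|].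
  eapply agree_on_trans;
    [apply iter_pd_csum; intros; apply smooth_on_mult; now apply smooth_on_iter_pd|].
  apply agree_on_csum; intros cc _; apply iter_pd_mult; now apply smooth_on_iter_pd.
Qed.

Lemma Cmod_dpow_mult_le i j phi f x B : smooth_on U phi -> smooth_on U f -> U x ->
  (forall a a' c c', (a + a' = i)%nat -> (c + c' = j)%nat ->
     Cmod (dpow a c phi x) * Cmod (dpow a' c' f x) <= B) ->
  Cmod (dpow i j (fmult phi f) x) <= 2 ^ (i + j) * B.
Proof.
  intros Hphi Hf Hx H; rewrite (dpow_mult i j phi f Hphi Hf x Hx).
  replace (2 ^ (i + j) * B)
    with (INR (length (leibniz_pairs j)) * (INR (length (leibniz_pairs i)) * B)).
  - apply Cmod_csum_le; intros [c c'] Hc; apply Cmod_csum_le; intros [a a'] Ha.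
    unfold fmult; rewrite Cmod_mult; apply H; eapply in_leibniz_pairs; eauto.
  - rewrite !length_leibniz_pairs, !pow_INR, pow_add.
    replace (INR 2) with 2 by (simpl; ring); ring.
Qed.

End Calculus.

Lemma is_derive_sum_f_R0 (F : nat -> R -> R) (F' : nat -> R) n x :
  (forall k, is_derive (F k) x (F' k)) ->
  is_derive (fun t => sum_f_R0 (fun k => F k t) n) x (sum_f_R0 F' n).
Proof.
  intros H; induction n as [|n IH]; simpl; [apply H|].
  apply (is_derive_plus (fun t => sum_f_R0 (fun k => F k t) n) (F (S n))); auto.
Qed.

Lemma continuous_sum_f_R0 (F : nat -> pt -> R) n p :
  (forall k, continuous (F k) p) -> continuous (fun q => sum_f_R0 (fun k => F k q) n) p.
Proof.
  intros H; induction n as [|n IH]; simpl; [apply H|].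
  apply (continuous_plus (fun q => sum_f_R0 (fun k => F k q) n) (F (S n))); auto.
Qed.

Definition sep_sum (a : R) (c : nat -> nat -> R) (u v : nat -> R -> R) (n : nat) (p : pt) : C :=
  RtoC (a + sum_f_R0 (fun k => sum_f_R0 (fun l => c k l * u k (fst p) * v l (snd p)) n) n).

Lemma is_derive_sep_sum_fst a c u v n p : (forall k, ex_derive (u k) (fst p)) ->
  is_derive (fun t => fst (sep_sum a c u v n (t, snd p))) (fst p)
    (fst (sep_sum 0 c (fun k => Derive (u k)) v n p)).
Proof.
  intros Hu; unfold sep_sum; simpl.
  apply (is_derive_plus (fun _ => a)); [apply (@is_derive_const R_AbsRing R_NormedModule)|].
  apply is_derive_sum_f_R0; intro k; apply is_derive_sum_f_R0; intro l.
  auto_derive; auto; now rewrite Rmult_1_l.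
Qed.

Lemma is_derive_sep_sum_snd a c u v n p : (forall l, ex_derive (v l) (snd p)) ->
  is_derive (fun t => fst (sep_sum a c u v n (fst p, t))) (snd p)
    (fst (sep_sum 0 c u (fun l => Derive (v l)) n p)).
Proof.
  intros Hv; unfold sep_sum; simpl.
  apply (is_derive_plus (fun _ => a)); [apply (@is_derive_const R_AbsRing R_NormedModule)|].
  apply is_derive_sum_f_R0; intro k; apply is_derive_sum_f_R0; intro l.
  auto_derive; auto; now rewrite Rmult_1_l.
Qed.

Lemma pd_false_sep_sum a c u v n : (forall k x, ex_derive (u k) x) ->
  pd false (sep_sum a c u v n) = sep_sum 0 c (fun k => Derive (u k)) v n.
Proof.
  intros Hu; apply functional_extensionality; intro p; rewrite pdE.
  apply injective_projections; [apply is_derive_unique, is_derive_sep_sum_fst; intro; apply Hu|].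
  unfold sep_sum, RtoC; simpl; apply Derive_const.
Qed.

Lemma pd_true_sep_sum a c u v n : (forall l y, ex_derive (v l) y) ->
  pd true (sep_sum a c u v n) = sep_sum 0 c u (fun l => Derive (v l)) n.
Proof.
  intros Hv; apply functional_extensionality; intro p; rewrite pdE.
  apply injective_projections; [apply is_derive_unique, is_derive_sep_sum_snd; intro; apply Hv|].
  unfold sep_sum, RtoC; simpl; apply Derive_const.
Qed.

Lemma dpow_sep_sum i j a c u v n :
  (forall k, smooth_R (u k)) -> (forall l, smooth_R (v l)) ->
  dpow i j (sep_sum a c u v n) =
  sep_sum (match i, j with 0%nat, 0%nat => a | _, _ => 0 end) c
    (fun k => Derive_n (u k) i) (fun l => Derive_n (v l) j) n.
Proof.
  intros Hu Hv; rewrite dpowE.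
  assert (Hj : Nat.iter j (pd true) (sep_sum a c u v n) =
               sep_sum (match j with 0%nat => a | _ => 0 end) c u (fun l => Derive_n (v l) j) n).
  { induction j as [|j IH]; [reflexivity|]; rewrite Nat.iter_succ, IH.
    apply pd_true_sep_sum; intros; apply smooth_R_ex_derive, smooth_R_Derive_n, Hv. }
  rewrite Hj; clear Hj; induction i as [|i IH]; [now destruct j|]; rewrite Nat.iter_succ, IH.
  rewrite pd_false_sep_sum; [now destruct j | intros; apply smooth_R_ex_derive, smooth_R_Derive_n, Hu].
Qed.

Lemma diff_on_sep_sum U a c u v n :
  (forall k, smooth_R (u k)) -> (forall l, smooth_R (v l)) -> diff_on U (sep_sum a c u v n).
Proof.
  intros Hu Hv [x y] _; split.
  - intros []; apply ex_pdE; simpl; split; unfold sep_sum, RtoC; simpl;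
      try apply ex_derive_const; eexists.
    + apply (is_derive_sep_sum_snd a c u v n (x, y)); intro; apply smooth_R_ex_derive, Hv.
    + apply (is_derive_sep_sum_fst a c u v n (x, y)); intro; apply smooth_R_ex_derive, Hu.
  - apply continuous_C; unfold sep_sum, RtoC; simpl; [|apply continuous_const].
    apply (continuous_plus (fun _ => a)); [apply continuous_const|].
    apply continuous_sum_f_R0; intro k; apply continuous_sum_f_R0; intro l.
    apply (@continuous_mult _ R_AbsRing); [apply (@continuous_mult _ R_AbsRing)|];
      [apply continuous_const | |].
    + apply (continuous_comp fst (u k)); [apply continuous_fst | apply smooth_R_continuous, Hu].
    + apply (continuous_comp snd (v l)); [apply continuous_snd | apply smooth_R_continuous, Hv].
Qed.

Lemma smooth_on_sep_sum U a c u v n :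
  (forall k, smooth_R (u k)) -> (forall l, smooth_R (v l)) -> smooth_on U (sep_sum a c u v n).
Proof.
  intros Hu Hv; apply smooth_on_upto; intro L; revert a u v Hu Hv.
  induction L as [|L IH]; intros a u v Hu Hv; (split; [now apply diff_on_sep_sum|]); auto.
  intros [].
  - rewrite pd_true_sep_sum; [apply IH; auto using smooth_R_Derive|].
    intros; now apply smooth_R_ex_derive.
  - rewrite pd_false_sep_sum; [apply IH; auto using smooth_R_Derive|].
    intros; now apply smooth_R_ex_derive.
Qed.

Lemma Cmod_sep_sum_le a c u v n p : (forall k l, Rabs (c k l) <= 1) ->
  Cmod (sep_sum a c u v n p) <=
  Rabs a + sum_f_R0 (fun k => Rabs (u k (fst p))) n * sum_f_R0 (fun l => Rabs (v l (snd p))) n.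
Proof.
  intros Hc; unfold sep_sum; rewrite Cmod_R.
  eapply Rle_trans; [apply Rabs_triang | apply Rplus_le_compat_l].
  eapply Rle_trans; [apply Rabs_triang_gen|].
  rewrite Rmult_comm, scal_sum; apply sum_Rle; intros k _.
  eapply Rle_trans; [apply Rabs_triang_gen|].
  rewrite scal_sum; apply sum_Rle; intros l _.
  rewrite !Rabs_mult, Rmult_assoc, (Rmult_comm (Rabs (v l (snd p)))).
  generalize (Hc k l) (Rmult_le_pos _ _ (Rabs_pos (u k (fst p))) (Rabs_pos (v l (snd p)))).
  intros; nra.
Qed.

Lemma compact_set_ext (A B : pt -> Prop) :
  (forall p, A p <-> B p) -> compact_set A -> compact_set B.
Proof.
  intros E HA I V HV Hc; destruct (HA I V HV) as [l Hl]; [intros x Ax; apply Hc, E, Ax|].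
  exists l; intros x Bx; apply Hl, E, Bx.
Qed.

Lemma compact_set_empty : compact_set (fun _ => False).
Proof. intros I V _ _; exists nil; intros x []. Qed.

Lemma compact_set_union (A B : pt -> Prop) :
  compact_set A -> compact_set B -> compact_set (fun p => A p \/ B p).
Proof.
  intros HA HB I V HV Hc.
  destruct (HA I V HV) as [l1 H1]; [intros; apply Hc; auto|].
  destruct (HB I V HV) as [l2 H2]; [intros; apply Hc; auto|].
  exists (l1 ++ l2); intros x [Ax | Bx].
  - destruct (H1 x Ax) as [i [Hi Vi]]; exists i; split; [apply in_or_app; auto | exact Vi].
  - destruct (H2 x Bx) as [i [Hi Vi]]; exists i; split; [apply in_or_app; auto | exact Vi].
Qed.

Lemma compact_set_bigunion n (A : nat -> pt -> Prop) :
  (forall k, (k <= n)%nat -> compact_set (A k)) ->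
  compact_set (fun p => exists k, (k <= n)%nat /\ A k p).
Proof.
  induction n as [|n IH]; intros HA.
  - apply (compact_set_ext (A 0%nat)); [|apply HA; lia].
    intro p; split; [intros H; exists 0%nat; auto | intros [k [Hk H]]; now replace 0%nat with k by lia].
  - apply (compact_set_ext (fun p => (exists k, (k <= n)%nat /\ A k p) \/ A (S n) p)).
    + intro p; split.
      * intros [[k [Hk Ak]] | An]; [exists k | exists (S n)]; split; auto.
      * intros [k [Hk Ak]]; destruct (Nat.eq_dec k (S n)) as [-> | Hne]; [now right|].
        left; exists k; split; [lia | exact Ak].
    + apply compact_set_union; [apply IH; intros; apply HA; lia | apply HA; lia].
Qed.

Definition rect (a b a' b' : R) (p : pt) : Prop := a <= fst p <= b /\ a' <= snd p <= b'.

Lemma compact_set_rect a b a' b' : a <= b -> a' <= b' -> compact_set (rect a b a' b').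
Proof.
  intros Hab Hab' I V HV Hc.
  destruct (Hc (a, a')) as [i0 _]; [unfold rect; simpl; lra|].
  set (ptof := fun t : Compactness.Tn 2 R => (fst t, fst (snd t)) : pt).
  assert (Hex : forall t : Compactness.Tn 2 R, exists ie : I * posreal,
     rect a b a' b' (ptof t) -> forall q : pt, Rabs (fst q - fst (ptof t)) < snd ie ->
        Rabs (snd q - snd (ptof t)) < snd ie -> V (fst ie) q).
  { intro t; destruct (classic (rect a b a' b' (ptof t))) as [Hr | Hr].
    - destruct (Hc _ Hr) as [i Vi]; destruct (HV i (ptof t) Vi) as [e He].
      exists (i, e); intros _ q H1 H2; apply He; split; assumption.
    - exists (i0, mkposreal 1 Rlt_0_1); intro; contradiction. }
  set (F := fun t => proj1_sig (constructive_indefinite_description _ (Hex t))).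
  assert (HF : forall t, rect a b a' b' (ptof t) -> forall q : pt,
             Rabs (fst q - fst (ptof t)) < snd (F t) ->
             Rabs (snd q - snd (ptof t)) < snd (F t) -> V (fst (F t)) q).
  { intro t; unfold F; destruct (constructive_indefinite_description _ (Hex t)) as [ie Hie].
    exact Hie. }
  apply NNPP; intro Hn.
  apply (compactness_list 2 (a, (a', tt)) (b, (b', tt)) (fun t => snd (F t))); intros [l Hl].
  apply Hn; exists (map (fun t => fst (F t)) l); intros x Hx.
  destruct (Hl (fst x, (snd x, tt))) as [t [Ht [Hbt Hct]]]; [destruct Hx; simpl; auto|].
  exists (fst (F t)); split; [apply (in_map (fun t => fst (F t))); exact Ht|].
  destruct t as [t1 [t2 []]]; simpl in Hbt, Hct.
  destruct Hbt as [B1 [B2 _]], Hct as [Q1 [Q2 _]].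
  apply HF; [split; assumption | exact Q1 | exact Q2].
Qed.

Lemma compact_set_bounded K : compact_set K ->
  exists R0, 0 <= R0 /\ forall z, K z -> Rabs (fst z) <= R0 /\ Rabs (snd z) <= R0.
Proof.
  intros HK.
  destruct (HK nat (fun i p => Rabs (fst p) < INR i /\ Rabs (snd p) < INR i)) as [l Hl].
  - intros i [p1 p2] [H1 H2]; simpl in H1, H2.
    set (e := Rmin (INR i - Rabs p1) (INR i - Rabs p2)).
    assert (He : 0 < e) by (apply Rmin_glb_lt; lra).
    exists (mkposreal e He); intros [q1 q2] [Hq1 Hq2].
    change (Rabs (q1 - p1) < e) in Hq1; change (Rabs (q2 - p2) < e) in Hq2.
    assert (e <= INR i - Rabs p1) by apply Rmin_l; assert (e <= INR i - Rabs p2) by apply Rmin_r.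
    generalize (Rabs_triang_inv q1 p1) (Rabs_triang_inv q2 p2); simpl; intros; split; lra.
  - intros p _; destruct (INR_archimed 1 (Rmax (Rabs (fst p)) (Rabs (snd p)))) as [n Hn]; [lra|].
    exists n; generalize (Rmax_l (Rabs (fst p)) (Rabs (snd p))) (Rmax_r (Rabs (fst p)) (Rabs (snd p))).
    intros; split; lra.
  - exists (INR (list_max l)); split; [apply pos_INR|].
    intros z Kz; destruct (Hl z Kz) as [i [Hi [H1 H2]]].
    assert (INR i <= INR (list_max l)).
    { apply le_INR, (proj1 (Forall_forall _ l) (proj1 (list_max_le l (list_max l)) (le_n _)) i Hi). }
    split; lra.
Qed.

Lemma eucl_triangle p q r : eucl p q <= eucl p r + eucl r q.
Proof.
  assert (E : forall a b : pt, eucl a b = dist_euc (fst a) (snd a) (fst b) (snd b))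
    by (intros; unfold eucl, dist_euc, Rsqr; f_equal; ring).
  rewrite !E; apply triangle.
Qed.

Lemma eucl_sym p q : eucl p q = eucl q p.
Proof. unfold eucl; f_equal; ring. Qed.

Lemma eucl_ge0 p q : 0 <= eucl p q.
Proof. apply sqrt_pos. Qed.

Lemma eucl_le_abs p q : eucl p q <= Rabs (fst p - fst q) + Rabs (snd p - snd q).
Proof.
  unfold eucl; set (a := fst p - fst q); set (b := snd p - snd q).
  generalize (Rabs_pos a) (Rabs_pos b); intros.
  rewrite <- (sqrt_pow2 (Rabs a + Rabs b)) by lra.
  apply sqrt_le_1; [nra | nra |].
  rewrite <- (pow2_abs a), <- (pow2_abs b); nra.
Qed.

Definition seg (x p : pt) (s : R) : pt :=
  (fst x + s * (fst p - fst x), snd x + s * (snd p - snd x)).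

Lemma eucl_seg x p s s' : eucl (seg x p s) (seg x p s') = Rabs (s - s') * eucl x p.
Proof.
  unfold eucl at 2; rewrite <- sqrt_Rsqr_abs, <- sqrt_mult_alt by apply Rle_0_sqr.
  unfold eucl, seg, Rsqr; simpl; f_equal; ring.
Qed.

Lemma seg_0 x p : seg x p 0 = x.
Proof. unfold seg; destruct x; simpl; f_equal; ring. Qed.

Lemma seg_1 x p : seg x p 1 = p.
Proof. unfold seg; destruct x, p; simpl; f_equal; ring. Qed.

Lemma eucl_seg_lt x p s t eps :
  Rabs (s - t) < eps / (eucl x p + 1) -> eucl (seg x p t) (seg x p s) < eps.
Proof.
  intros Hs; assert (HD : 0 < eucl x p + 1) by (generalize (eucl_ge0 x p); lra).
  rewrite eucl_seg, Rabs_minus_sym.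
  apply Rmult_lt_compat_r with (r := eucl x p + 1) in Hs; [|exact HD].
  replace (eps / (eucl x p + 1) * (eucl x p + 1)) with eps in Hs by (field; lra).
  generalize (Rabs_pos (s - t)); intros; nra.
Qed.

(* The last exit time [T] of the segment from [x] to [p] out of [U] gives a boundary point:
   points before [T] lie in [U], points after it (or [p] itself) do not. *)
Lemma segment_boundary (U : pt -> Prop) x p : U x -> ~ U p ->
  exists y, boundary U y /\ eucl x y <= eucl x p.
Proof.
  intros Ux Np.
  set (E := fun t => 0 <= t <= 1 /\ U (seg x p t)).
  assert (E0 : E 0) by (split; [lra | now rewrite seg_0]).
  destruct (completeness E) as [T [HT1 HT2]]; [exists 1; intros t [Ht _]; lra | now exists 0|].
  assert (T0 : 0 <= T) by now apply HT1.
  assert (T1 : T <= 1) by (apply HT2; intros t [Ht _]; lra).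
  assert (HD : 0 < eucl x p + 1) by (generalize (eucl_ge0 x p); lra).
  exists (seg x p T); repeat split.
  - intros eps Heps; set (d := eps / (eucl x p + 1)).
    assert (Hd : 0 < d) by (apply Rdiv_lt_0_compat; auto).
    destruct (classic (exists t, E t /\ T - d < t)) as [[t [Et Ht]] | Hno].
    + exists (seg x p t); split; [apply Et|]; apply eucl_seg_lt.
      assert (t <= T) by now apply HT1.
      fold d; rewrite Rabs_left1 by lra; lra.
    + assert (T <= T - d); [|lra].
      apply HT2; intros t Et; apply Rnot_lt_le; intro Ht; apply Hno; now exists t.
  - intros eps Heps; set (d := eps / (eucl x p + 1)).
    assert (Hd : 0 < d) by (apply Rdiv_lt_0_compat; auto).
    destruct (Req_dec T 1) as [-> | HT].
    + exists p; split; [exact Np|]; rewrite <- (seg_1 x p) at 2; apply eucl_seg_lt.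
      rewrite Rminus_eq_0, Rabs_R0; exact Hd.
    + set (t := T + Rmin (1 - T) d / 2).
      assert (Hm : 0 < Rmin (1 - T) d) by (apply Rmin_glb_lt; lra).
      assert (Hm1 := Rmin_l (1 - T) d); assert (Hm2 := Rmin_r (1 - T) d).
      exists (seg x p t); split.
      * intro Ut; assert (t <= T) by (apply HT1; split; [unfold t; lra | exact Ut]).
        unfold t in *; lra.
      * apply eucl_seg_lt; fold d; unfold t; rewrite Rabs_pos_eq; lra.
  - rewrite <- (seg_0 x p) at 1; rewrite eucl_seg, Rabs_minus_sym, Rminus_0_r, Rabs_pos_eq by exact T0.
    generalize (eucl_ge0 x p); intros; nra.
Qed.

Lemma near_closure_in (W U : pt -> Prop) delta :
  (forall x, W x -> U x) -> (forall x y, W x -> boundary U y -> delta <= eucl x y) ->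
  forall z p, closure_of W z -> eucl p z < delta -> U p.
Proof.
  intros WU Hd z p Hz Hp; apply NNPP; intro Np.
  destruct (Hz (delta - eucl p z)) as [x [Wx Hx]]; [lra|].
  destruct (segment_boundary U x p (WU x Wx) Np) as [y [By Hy]].
  generalize (Hd x y Wx By) (eucl_triangle x p z) (eucl_sym p z) (eucl_sym z x); intros.
  lra.
Qed.

Lemma sum_f_R0_neq0 (a : nat -> R) n : sum_f_R0 a n <> 0 -> exists k, (k <= n)%nat /\ a k <> 0.
Proof.
  intros H; apply NNPP; intro Hno; apply H.
  rewrite (sum_eq _ (fun _ => 0)), sum_cte; [ring|].
  intros k Hk; apply NNPP; intro Hk0; apply Hno; now exists k.
Qed.

Lemma sum_f_R0_mult_sep (a b : nat -> R) n :
  sum_f_R0 (fun k => sum_f_R0 (fun l => a k * b l) n) n = sum_f_R0 a n * sum_f_R0 b n.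
Proof.
  rewrite Rmult_comm, scal_sum; apply sum_eq; intros k _.
  rewrite scal_sum; apply sum_eq; intros; ring.
Qed.

Section Grid.

Variables (r : R) (N : nat) (K : pt -> Prop).
Hypothesis r_pos : 0 < r.

Definition center (k : nat) : R := (INR k - INR N + 1) * r.

Definition cell_meets (k l : nat) : Prop :=
  exists z, K z /\ Rabs (fst z - center k) <= 2 * r /\ Rabs (snd z - center l) <= 2 * r.

Definition cell_coef (k l : nat) : R :=
  if excluded_middle_informative (cell_meets k l) then 1 else 0.

Definition cutoff : pt -> C := sep_sum 0 cell_coef (tile r N) (tile r N) (2 * N).
Definition cutoff_compl : pt -> C :=
  sep_sum 1 (fun k l => - cell_coef k l) (tile r N) (tile r N) (2 * N).

Lemma cutoff_plus_compl p : Cplus (cutoff p) (cutoff_compl p) = RtoC 1.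
Proof.
  unfold cutoff, cutoff_compl, sep_sum, Cplus, RtoC; simpl; f_equal; [|ring].
  rewrite Rplus_0_l, Rplus_comm, Rplus_assoc, <- plus_sum; rewrite <- Rplus_0_r at 1; f_equal.
  rewrite (sum_eq _ (fun _ => 0)), sum_cte; [ring|]; intros k _.
  rewrite <- plus_sum, (sum_eq _ (fun _ => 0)), sum_cte; [ring|]; intros l _; ring.
Qed.

Lemma smooth_on_cutoff U : smooth_on U cutoff.
Proof. apply smooth_on_sep_sum; intro; apply smooth_R_tile. Qed.

Lemma smooth_on_cutoff_compl U : smooth_on U cutoff_compl.
Proof. apply smooth_on_sep_sum; intro; apply smooth_R_tile. Qed.

Definition cutoff_support (p : pt) : Prop :=
  exists k, (k <= 2 * N)%nat /\ exists l, (l <= 2 * N)%nat /\ cell_coef k l = 1 /\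
    rect ((INR k - INR N) * r) ((INR k - INR N + 2) * r)
         ((INR l - INR N) * r) ((INR l - INR N + 2) * r) p.

Lemma compact_set_cutoff_support : compact_set cutoff_support.
Proof.
  apply compact_set_bigunion; intros k _; apply compact_set_bigunion; intros l _.
  unfold cell_coef; destruct (excluded_middle_informative (cell_meets k l)).
  - apply (compact_set_ext (rect ((INR k - INR N) * r) ((INR k - INR N + 2) * r)
                                  ((INR l - INR N) * r) ((INR l - INR N + 2) * r))).
    + intro p; tauto.
    + apply compact_set_rect; nra.
  - apply (compact_set_ext (fun _ => False)); [intro p; split; [tauto | lra] | apply compact_set_empty].
Qed.

Lemma cutoff_support_near p : cutoff_support p -> exists z, K z /\ eucl p z <= 6 * r.
Proof.
  intros [k [_ [l [_ [Hc [[R1 R2] [R3 R4]]]]]]].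
  unfold cell_coef in Hc; destruct (excluded_middle_informative (cell_meets k l))
    as [[z [Kz [Z1 Z2]]] | _]; [|lra].
  exists z; split; [exact Kz|].
  eapply Rle_trans; [apply eucl_le_abs|]; unfold center in Z1, Z2.
  apply Rabs_le_between' in Z1; apply Rabs_le_between' in Z2.
  assert (Rabs (fst p - fst z) <= 3 * r) by (apply Rabs_le_between'; lra).
  assert (Rabs (snd p - snd z) <= 3 * r) by (apply Rabs_le_between'; lra).
  lra.
Qed.

Lemma cutoff_eq0 p : ~ cutoff_support p -> cutoff p = RtoC 0.
Proof.
  intros Hp; unfold cutoff, sep_sum; f_equal; rewrite Rplus_0_l.
  apply NNPP; intro Hnz.
  destruct (sum_f_R0_neq0 _ _ Hnz) as [k [Hk Hk2]].
  destruct (sum_f_R0_neq0 _ _ Hk2) as [l [Hl Hl2]].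
  apply Hp; exists k; split; [exact Hk|]; exists l; split; [exact Hl|].
  assert (Hkp : tile r N k (fst p) <> 0) by (intro h; apply Hl2; rewrite h; ring).
  assert (Hlp : tile r N l (snd p) <> 0) by (intro h; apply Hl2; rewrite h; ring).
  apply tile_neq0 in Hkp; [|exact r_pos]; apply tile_neq0 in Hlp; [|exact r_pos].
  split; [|unfold rect; lra].
  unfold cell_coef in *; destruct (excluded_middle_informative (cell_meets k l)); [reflexivity|].
  exfalso; apply Hl2; ring.
Qed.

Definition near_box (q : pt) : Prop :=
  exists z, K z /\ Rabs (fst q - fst z) < r / 2 /\ Rabs (snd q - snd z) < r / 2.

Lemma open_near_box : open near_box.
Proof.
  intros [q1 q2] [[z1 z2] [Kz [A1 A2]]]; simpl in A1, A2.
  set (e := Rmin (r / 2 - Rabs (q1 - z1)) (r / 2 - Rabs (q2 - z2))).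
  assert (He : 0 < e) by (apply Rmin_glb_lt; lra).
  assert (e <= r / 2 - Rabs (q1 - z1)) by apply Rmin_l.
  assert (e <= r / 2 - Rabs (q2 - z2)) by apply Rmin_r.
  exists (mkposreal e He); intros [y1 y2] [Y1 Y2].
  change (Rabs (y1 - q1) < e) in Y1; change (Rabs (y2 - q2) < e) in Y2.
  exists (z1, z2); split; [exact Kz|]; simpl.
  generalize (Rabs_triang (y1 - q1) (q1 - z1)) (Rabs_triang (y2 - q2) (q2 - z2)).
  replace (y1 - q1 + (q1 - z1)) with (y1 - z1) by ring.
  replace (y2 - q2 + (q2 - z2)) with (y2 - z2) by ring.
  intros; split; lra.
Qed.

Lemma near_box_self z : K z -> near_box z.
Proof. intros Kz; exists z; rewrite !Rminus_eq_0, Rabs_R0; repeat split; auto; lra. Qed.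

Hypothesis K_inside :
  forall z, K z -> Rabs (fst z) <= (INR N - 2) * r /\ Rabs (snd z) <= (INR N - 2) * r.

(* Near [K] every cell where both tiles are nonzero meets [K], so [cutoff] is
   the full product of the two partitions of unity there. *)
Lemma cutoff_compl_eq0 q : near_box q -> cutoff_compl q = RtoC 0.
Proof.
  intros [z [Kz [A1 A2]]]; destruct (K_inside z Kz) as [B1 B2].
  unfold cutoff_compl, sep_sum; f_equal.
  rewrite (sum_eq _ (fun k => sum_f_R0 (fun l => - (tile r N k (fst q) * tile r N l (snd q))) (2 * N))).
  - rewrite (sum_eq _ (fun k => sum_f_R0 (fun l => tile r N k (fst q) * tile r N l (snd q)) (2 * N) * -1)).
    + apply Rabs_lt_between' in A1; apply Rabs_lt_between' in A2.
      apply Rabs_le_between in B1; apply Rabs_le_between in B2.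
      rewrite <- scal_sum, sum_f_R0_mult_sep, !sum_tile; try exact r_pos; try ring;
        apply Rabs_le_between; lra.
    + intros k _; rewrite Rmult_comm, scal_sum; apply sum_eq; intros; ring.
  - intros k _; apply sum_eq; intros l _.
    destruct (Req_dec (tile r N k (fst q)) 0) as [-> | Hk]; [ring|].
    destruct (Req_dec (tile r N l (snd q)) 0) as [-> | Hl]; [ring|].
    apply tile_neq0 in Hk; [|exact r_pos]; apply tile_neq0 in Hl; [|exact r_pos].
    unfold cell_coef; destruct (excluded_middle_informative (cell_meets k l)) as [_ | Hno]; [ring|].
    exfalso; apply Hno; exists z; split; [exact Kz|]; unfold center.
    apply Rabs_lt_between' in A1; apply Rabs_lt_between' in A2.
    split; apply Rabs_le_between'; lra.
Qed.

End Grid.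

Lemma Cmod_dpow_cutoff_compl_le r N K m B i j p : 0 < r ->
  (forall i u, (i <= m)%nat -> Rabs (Derive_n bump i u) <= B) -> (i <= m)%nat -> (j <= m)%nat ->
  Cmod (dpow i j (cutoff_compl r N K) p) <= 1 + (2 * B * Rmax 1 (/ r) ^ m) ^ 2.
Proof.
  intros Hr HB Hi Hj.
  assert (HB0 : 0 <= B) by (eapply Rle_trans; [apply Rabs_pos | apply (HB 0%nat 0); lia]).
  assert (Hpow : forall k, (k <= m)%nat -> (/ r) ^ k <= Rmax 1 (/ r) ^ m).
  { intros k Hk; apply Rle_trans with (Rmax 1 (/ r) ^ k); [|apply Rle_pow; auto using Rmax_l].
    apply pow_incr; split; [apply Rlt_le, Rinv_0_lt_compat, Hr | apply Rmax_r]. }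
  assert (Hsum : forall k x, (k <= m)%nat ->
            sum_f_R0 (fun l => Rabs (Derive_n (tile r N l) k x)) (2 * N) <= 2 * B * Rmax 1 (/ r) ^ m).
  { intros k x Hk; eapply Rle_trans; [apply sum_abs_Derive_n_tile_le; auto|].
    apply Rmult_le_compat_l; [lra | auto]. }
  unfold cutoff_compl; rewrite dpow_sep_sum by (intro; apply smooth_R_tile).
  eapply Rle_trans; [apply Cmod_sep_sum_le|].
  - intros k l; unfold cell_coef; destruct (excluded_middle_informative _);
      rewrite ?Ropp_0, ?Rabs_R0, ?Rabs_Ropp, ?Rabs_R1; lra.
  - rewrite <- Rsqr_pow2; apply Rplus_le_compat.
    + destruct i, j; rewrite ?Rabs_R0, ?Rabs_R1; lra.
    + apply Rmult_le_compat; auto; apply cond_pos_sum; intro; apply Rabs_pos.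
Qed.

Lemma exists_grid_cutoff (r : R) (m : nat) : 0 < r ->
  exists T, forall K, compact_set K ->
  exists psi chi : pt -> C,
    (forall p, Cplus (psi p) (chi p) = RtoC 1) /\
    (forall U, smooth_on U psi) /\ (forall U, smooth_on U chi) /\
    (exists Ks, compact_set Ks /\ (forall p, Ks p -> exists z, K z /\ eucl p z <= 6 * r) /\
                (forall p, ~ Ks p -> psi p = RtoC 0)) /\
    (exists V, open V /\ (forall z, K z -> V z) /\ (forall p, V p -> chi p = RtoC 0)) /\
    (forall i j p, (i + j <= m)%nat -> Cmod (dpow i j chi p) <= T).
Proof.
  intros Hr; destruct (Derive_n_bump_bounded m) as [B HB].
  exists (1 + (2 * B * Rmax 1 (/ r) ^ m) ^ 2); intros K HK.
  destruct (compact_set_bounded K HK) as [R0 [HR0 HK0]].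
  destruct (INR_archimed r (R0 + 2 * r)) as [N HN]; [lra|].
  assert (HKN : forall z, K z -> Rabs (fst z) <= (INR N - 2) * r /\ Rabs (snd z) <= (INR N - 2) * r)
    by (intros z Kz; destruct (HK0 z Kz); split; lra).
  exists (cutoff r N K), (cutoff_compl r N K).
  split; [apply cutoff_plus_compl|].
  split; [apply smooth_on_cutoff|].
  split; [apply smooth_on_cutoff_compl|].
  split.
  - exists (cutoff_support r N K); split; [now apply compact_set_cutoff_support|].
    split; [apply cutoff_support_near | apply cutoff_eq0; exact Hr].
  - split.
    + exists (near_box r K); split; [apply open_near_box|].
      split; [exact (near_box_self r K Hr) | exact (cutoff_compl_eq0 r N K Hr HKN)].
    + intros i j p Hij; apply Cmod_dpow_cutoff_compl_le; auto; lia.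
Qed.

Lemma wbound_le U nu m f c c' : c <= c' -> wbound U nu m f c -> wbound U nu m f c'.
Proof. intros Hc H x i j Hx Hij; eapply Rle_trans; [apply H |]; auto. Qed.

(* Near [K] the remainder [chi f] vanishes identically; away from [K] the weight
   [nu] is at most [e] times [nuU], which is what the bound on [f] controls. *)
Lemma wbound_cutoff_remainder (U W V K : pt -> Prop) (nu nuU : pt -> R) (chi f : pt -> C)
    (m : nat) (T cf e : R) :
  open U -> open V -> (forall x, W x -> U x) -> smooth_on U chi -> smooth_on U f ->
  (forall z, K z -> V z) -> (forall p, V p -> chi p = RtoC 0) ->
  (forall x, W x -> 0 < nu x) -> (forall x, W x -> 0 < nuU x) ->
  (forall x, W x -> ~ K x -> nu x <= e * nuU x) -> 0 <= e ->
  (forall i j p, (i + j <= m)%nat -> Cmod (dpow i j chi p) <= T) ->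
  wbound U nuU m f cf ->
  wbound W nu m (fmult chi f) (2 ^ m * T * Rabs cf * e).
Proof.
  intros HU HV HWU Hchi Hf HKV Hchi0 Hnu HnuU Hweight He HT Hcf x i j Wx Hij.
  assert (HT0 : 0 <= T) by (eapply Rle_trans; [apply Cmod_ge_0 | apply (HT 0%nat 0%nat x); lia]).
  assert (Hbound0 : 0 <= 2 ^ m * T * Rabs cf * e)
    by (apply Rmult_le_pos; [apply Rmult_le_pos; [apply Rmult_le_pos; [apply pow_le; lra|]|]|];
        auto using Rabs_pos).
  destruct (classic (K x)) as [Kx | nKx].
  - assert (Hzero : agree_on V (fmult chi f) fzero)
      by (intros p Hp; unfold fmult, fzero; rewrite Hchi0 by exact Hp; apply Cmult_0_l).
    rewrite (agree_on_dpow V HV i j _ _ Hzero x (HKV x Kx)), dpow_fzero.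
    unfold fzero; rewrite Cmod_0, Rmult_0_l; exact Hbound0.
  - assert (HnuUx := HnuU x Wx).
    assert (Hfx : forall a c, (a + c <= m)%nat -> Cmod (dpow a c f x) <= Rabs cf / nuU x).
    { intros a c Hac; apply Rmult_le_reg_r with (nuU x); [exact HnuUx|].
      replace (Rabs cf / nuU x * nuU x) with (Rabs cf) by (field; lra).
      eapply Rle_trans; [apply (Hcf x a c (HWU x Wx) Hac) | apply Rle_abs]. }
    assert (Hleib : Cmod (dpow i j (fmult chi f) x) <= 2 ^ (i + j) * (T * (Rabs cf / nuU x))).
    { apply (Cmod_dpow_mult_le U HU); auto.
      intros a a' c c' Ha Hc; apply Rmult_le_compat; auto using Cmod_ge_0; [apply HT | apply Hfx]; lia. }
    assert (Hpow : 2 ^ (i + j) <= 2 ^ m) by (apply Rle_pow; [lra | exact Hij]).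
    assert (Hcf0 : 0 <= Rabs cf / nuU x) by (apply Rdiv_le_0_compat; auto using Rabs_pos).
    apply Rle_trans with (2 ^ (i + j) * (T * (Rabs cf / nuU x)) * (e * nuU x)).
    + apply Rmult_le_compat; auto using Cmod_ge_0; apply Rlt_le, Hnu, Wx.
    + replace (2 ^ (i + j) * (T * (Rabs cf / nuU x)) * (e * nuU x))
        with (2 ^ (i + j) * (T * Rabs cf * e)) by (field; lra).
      replace (2 ^ m * T * Rabs cf * e) with (2 ^ m * (T * Rabs cf * e)) by ring.
      apply Rmult_le_compat_r; [|exact Hpow].
      apply Rmult_le_pos; [apply Rmult_le_pos|]; auto using Rabs_pos.
Qed.

Lemma Cminus_mult_partition (a b z : C) : Cplus a b = RtoC 1 -> Cminus z (Cmult a z) = Cmult b z.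
Proof.
  destruct a as [a1 a2], b as [b1 b2], z as [z1 z2]; unfold Cplus, RtoC; simpl.
  intros H; injection H as H1 H2.
  replace b1 with (1 - a1) by lra; replace b2 with (- a2) by lra.
  unfold Cminus, Cplus, Copp, Cmult; simpl; f_equal; ring.
Qed.

Lemma monotone_family_le (P : nat -> pt -> Prop) :
  (forall n x, P n x -> P (S n) x) -> forall a b x, (a <= b)%nat -> P a x -> P b x.
Proof. intros H a b x Hab; induction Hab; auto. Qed.

Lemma test_fn_mult U psi f Ks : open U -> smooth_on U psi -> smooth_on U f ->
  compact_set Ks -> (forall p, Ks p -> U p) -> (forall p, ~ Ks p -> psi p = RtoC 0) ->
  test_fn U (fmult psi f).
Proof.
  intros HU Hpsi Hf HKs HKsU Hpsi0; split; [now apply smooth_on_mult|].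
  exists Ks; split; [exact HKs|]; split; [exact HKsU|].
  intros p Hp; unfold fmult; rewrite Hpsi0 by exact Hp; apply Cmult_0_l.
Qed.

Lemma exists_pos_mult_le (A eps : R) : 0 < eps -> exists e, 0 < e /\ A * e <= eps.
Proof.
  intros Heps; assert (HA := Rabs_pos A).
  exists (eps / (Rabs A + 1)); split; [apply Rdiv_lt_0_compat; lra|].
  apply Rle_trans with (Rabs A * (eps / (Rabs A + 1))).
  - apply Rmult_le_compat_r; [apply Rlt_le, Rdiv_lt_0_compat; lra | apply Rle_abs].
  - apply Rmult_le_reg_r with (Rabs A + 1); [lra|].
    replace (Rabs A * (eps / (Rabs A + 1)) * (Rabs A + 1)) with (Rabs A * eps) by (field; lra).
    nra.
Qed.

Theorem lemma4p4
  (Om : pt -> Prop) (Omn : nat -> pt -> Prop) (nu : nat -> pt -> R) (I1 : nat -> nat)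
  (HOm_open : open Om)
  (HOmn_open : forall n, open (Omn n))
  (HOmn_ne : forall n, exists x, Omn n x)
  (HOmn_notall : forall n, exists x, ~ Omn n x)
  (HOmn_incr : forall n x, Omn n x -> Omn (S n) x)
  (HOm_union : forall x, Om x <-> exists n, Omn n x)
  (Hdist : forall n k, (n < k)%nat -> dist_gt0 (Omn n) (boundary (Omn k)))
  (Hnu_pos : forall n x, Om x -> 0 < nu n x)
  (Hnu_cont : forall n x, Om x -> continuous (nu n) x)
  (Hnu_incr : forall n x, Om x -> nu n x <= nu (S n) x)
  (HI1 : forall n, (n < I1 n)%nat /\
     forall eps, 0 < eps -> exists K, compact_set K /\ (forall x, K x -> closure_of (Omn n) x) /\
       forall x, Omn n x -> ~ K x -> nu n x <= eps * nu (I1 n) x)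
  (n : nat) :
  forall f : pt -> C, Enu (Omn (I1 n)) (nu (I1 n)) f ->
  forall (m : nat) (eps : R), 0 < eps ->
  exists g : pt -> C, test_fn (Omn (I1 n)) g /\
    wbound (Omn n) (nu n) m (fun x => Cminus (f x) (g x)) eps.
Proof.
  intros f [Hf Hf_bound] m eps Heps.
  destruct (HI1 n) as [HnI HK].
  destruct (Hdist n (I1 n) HnI) as [delta [Hdelta Hbd]].
  assert (Hsub : forall x, Omn n x -> Omn (I1 n) x)
    by (intros x; apply (monotone_family_le Omn HOmn_incr); lia).
  assert (Hnu : forall k x, Omn n x -> 0 < nu k x)
    by (intros k x Hx; apply Hnu_pos, HOm_union; now exists n).
  destruct (exists_grid_cutoff (delta / 8) m) as [T HT]; [lra|].
  destruct (Hf_bound m) as [cf Hcf].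
  destruct (exists_pos_mult_le (2 ^ m * T * Rabs cf) eps Heps) as [e [He Hle]].
  destruct (HK e He) as [K [HKc [HKcl HKnu]]].
  destruct (HT K HKc) as
    [psi [chi [Hsum [Hpsi [Hchi [[Ks [HKs [HKs_near HKs0]]] [[V [HV [HKV HV0]]] Hchi_bd]]]]]]].
  exists (fmult psi f); split.
  - apply (test_fn_mult _ _ _ Ks); auto.
    intros p Kp; destruct (HKs_near p Kp) as [z [Kz Hpz]].
    apply (near_closure_in (Omn n) (Omn (I1 n)) delta Hsub Hbd z p (HKcl z Kz)); lra.
  - replace (fun x => Cminus (f x) (fmult psi f x)) with (fmult chi f)
      by (apply functional_extensionality; intro x; symmetry; apply Cminus_mult_partition, Hsum).
    apply (wbound_le _ _ _ _ _ _ Hle).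
    apply (wbound_cutoff_remainder (Omn (I1 n)) (Omn n) V K (nu n) (nu (I1 n))); auto; lra.
Qed.
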